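(* Let $H$ be a Hermitian $n\times n$ matrix (e.g. the adjacency matrix of an undirected graph on $n$ vertices) and let $\omega\in(0,1]$. Consider the evolution $$\frac{d}{dt}\varrho=-\mathrm i(1-\omega)[H,\varrho]+\omega\Big(H\varrho H^\dagger-\tfrac12\{H^\dagger H,\varrho\}\Big),$$ i.e. the GKSL equation with the single Lindblad operator $H$. Then: (i) its stationary states are exactly the stationary states of the pure Hamiltonian evolution $\frac{d}{dt}\varrho=-\mathrm i[H,\varrho]$ (i.e. the density matrices commuting with $H$); (ii) the evolution is convergent, i.e. for every initial density matrix $\varrho_0$ the limit $\lim_{t\to\infty}\varrho_t$ exists; (iii) the evolution is not relaxing (has more than one stationary state) if and only if $n>1$.
   Context: A stationary state is a density matrix $\varrho$ for which the right-hand side vanishes. The evolution is relaxing if there is a unique stationary state. $\{A,B\}=AB+BA$. *)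

From Stdlib Require Import Reals.
Open Scope R_scope.

Record C := mkC { Re : R ; Im : R }.
Definition C0 : C := mkC 0 0.
Definition C1 : C := mkC 1 0.
Definition Ci : C := mkC 0 1.
Definition RtoC (r : R) : C := mkC r 0.
Definition Cadd (x y : C) : C := mkC (Re x + Re y) (Im x + Im y).
Definition Copp (x : C) : C := mkC (- Re x) (- Im x).
Definition Cmul (x y : C) : C :=
  mkC (Re x * Re y - Im x * Im y) (Re x * Im y + Im x * Re y).
Definition Cconj (x : C) : C := mkC (Re x) (- Im x).
Definition Cnorm (x : C) : R := sqrt (Re x ^ 2 + Im x ^ 2).

Fixpoint Csum (n : nat) (f : nat -> C) : C :=
  match n with
  | O => C0
  | S m => Cadd (Csum m f) (f m)
  end.

(* ---------- n x n complex matrices ----------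
   A matrix is a function of (row, column); only entries with indices < n
   are meaningful; all notions below only look at those entries. *)
Definition Mat := nat -> nat -> C.
Definition mzero : Mat := fun _ _ => C0.
Definition madd (A B : Mat) : Mat := fun i j => Cadd (A i j) (B i j).
Definition mopp (A : Mat) : Mat := fun i j => Copp (A i j).
Definition mscale (c : C) (A : Mat) : Mat := fun i j => Cmul c (A i j).
Definition mmul (n : nat) (A B : Mat) : Mat :=
  fun i j => Csum n (fun k => Cmul (A i k) (B k j)).
Definition adj (A : Mat) : Mat := fun i j => Cconj (A j i).
Definition comm (n : nat) (A B : Mat) : Mat := madd (mmul n A B) (mopp (mmul n B A)).
Definition anticomm (n : nat) (A B : Mat) : Mat := madd (mmul n A B) (mmul n B A).
Definition trace (n : nat) (A : Mat) : C := Csum n (fun i => A i i).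

Definition meq (n : nat) (A B : Mat) : Prop :=
  forall i j, (i < n)%nat -> (j < n)%nat -> A i j = B i j.

Definition hermitian (n : nat) (A : Mat) : Prop := meq n A (adj A).

Definition psd (n : nat) (A : Mat) : Prop :=
  forall v : nat -> C,
    0 <= Re (Csum n (fun i => Cmul (Cconj (v i)) (Csum n (fun j => Cmul (A i j) (v j))))).

Definition density (n : nat) (rho : Mat) : Prop :=
  hermitian n rho /\ psd n rho /\ trace n rho = C1.

Definition gksl (n : nat) (w : R) (H : Mat) (rho : Mat) : Mat :=
  madd (mscale (Cmul (Copp Ci) (RtoC (1 - w))) (comm n H rho))
       (mscale (RtoC w)
          (madd (mmul n (mmul n H rho) (adj H))
                (mscale (RtoC (- (1/2))) (anticomm n (mmul n (adj H) H) rho)))).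

Definition ham (n : nat) (H : Mat) (rho : Mat) : Mat :=
  mscale (Copp Ci) (comm n H rho).

Definition stationary (n : nat) (L : Mat -> Mat) (rho : Mat) : Prop :=
  density n rho /\ meq n (L rho) mzero.

Definition relaxing (n : nat) (L : Mat -> Mat) : Prop :=
  exists rho, stationary n L rho /\
    forall sigma, stationary n L sigma -> meq n sigma rho.

Definition is_solution (n : nat) (L : Mat -> Mat) (rho : R -> Mat) : Prop :=
  forall t i j, (i < n)%nat -> (j < n)%nat ->
    derivable_pt_lim (fun s => Re (rho s i j)) t (Re (L (rho t) i j)) /\
    derivable_pt_lim (fun s => Im (rho s i j)) t (Im (L (rho t) i j)).

Definition converges (n : nat) (rho : R -> Mat) : Prop :=
  exists Linf : Mat, forall eps, eps > 0 -> exists T, forall t, t > T ->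
    forall i j, (i < n)%nat -> (j < n)%nat ->
      Cnorm (Cadd (rho t i j) (Copp (Linf i j))) < eps.

From Pilot Require Import Defs.
From Stdlib Require Import Reals Lra Lia.
From HB Require structures.
From mathcomp Require all_boot all_order all_algebra.
From mathcomp Require complex Rstruct spectral sesquilinear ring lra.

Open Scope R_scope.

(* Write H = P^* diag(lam) P with P unitary and lam real.  Conjugating by P turns
   the generator into an entrywise multiplication: the (a, b) entry of P rho P^* is
   multiplied by
     mu(lam_a, lam_b) = - i (1 - w) (lam_a - lam_b) - (w / 2) (lam_a - lam_b)^2,
   whose real part is negative unless lam_a = lam_b, where mu vanishes.  Hence the
   generator has the same kernel as [H, .], along a solution the entries with
   lam_a = lam_b are constant while the others decay exponentially, and every
   eigenprojector P^* e_k e_k^* P is a stationary state: there are n distinct ones,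
   while for n = 1 the trace condition leaves a single density matrix. *)

Lemma derivable_pt_lim_eq (f : R -> R) t l l' :
  derivable_pt_lim f t l -> l = l' -> derivable_pt_lim f t l'.
Proof. now intros ? <-. Qed.

Lemma derivable_pt_lim_comb (u v : R -> R) p q t du dv :
  derivable_pt_lim u t du -> derivable_pt_lim v t dv ->
  derivable_pt_lim (fun s => p * u s + q * v s) t (p * du + q * dv).
Proof.
  intros hu hv; apply (derivable_pt_lim_plus (fun s => p * u s) (fun s => q * v s));
    now apply derivable_pt_lim_scal.
Qed.

Lemma derivable_pt_lim_0_const (f : R -> R) :
  (forall t, derivable_pt_lim f t 0) -> forall t, f t = f 0.
Proof.
  intros hf t.
  destruct (Rtotal_order t 0) as [h | [-> | h]]; [| reflexivity |].
  - destruct (MVT_cor2 f (fun _ => 0) t 0 h) as [c [hc _]]; [intros; apply hf | lra].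
  - destruct (MVT_cor2 f (fun _ => 0) 0 t h) as [c [hc _]]; [intros; apply hf | lra].
Qed.

Lemma exp_vanishes a eps : a < 0 -> 0 < eps ->
  exists T, forall t, T < t -> exp (a * t) < eps.
Proof.
  intros ha he; exists (ln eps / a); intros t ht.
  rewrite <- (exp_ln eps he); apply exp_increasing.
  replace (ln eps) with (a * (ln eps / a)) by (field; lra).
  now apply Rmult_lt_gt_compat_neg_l.
Qed.

(* [exp (-2 a t) (u^2 + v^2)] has derivative zero. *)
Lemma rotation_ode_sq_norm (u v : R -> R) a b :
  (forall t, derivable_pt_lim u t (a * u t - b * v t) /\
             derivable_pt_lim v t (b * u t + a * v t)) ->
  forall t, u t ^ 2 + v t ^ 2 = (u 0 ^ 2 + v 0 ^ 2) * exp (a * t) ^ 2.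
Proof.
  intros huv.
  set (g t := exp (- (2 * a) * t) * (u t * u t + v t * v t)).
  assert (hg : forall t, derivable_pt_lim g t 0).
  { intro t; destruct (huv t) as [hu hv].
    eapply derivable_pt_lim_eq.
    - apply (derivable_pt_lim_mult (fun s => exp (- (2 * a) * s))
               (fun s => u s * u s + v s * v s)).
      + apply (derivable_pt_lim_comp (fun s => - (2 * a) * s) exp).
        * apply (derivable_pt_lim_scal id), derivable_pt_lim_id.
        * apply derivable_pt_lim_exp.
      + apply (derivable_pt_lim_plus (fun s => u s * u s) (fun s => v s * v s)).
        * apply (derivable_pt_lim_mult u u); exact hu.
        * apply (derivable_pt_lim_mult v v); exact hv.
    - unfold id; ring. }
  intro t; pose proof (derivable_pt_lim_0_const g hg t) as e; unfold g in e.
  rewrite Rmult_0_r, exp_0, Rmult_1_l in e.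
  assert (hE : exp (- (2 * a) * t) * exp (a * t) ^ 2 = 1)
    by (simpl; rewrite Rmult_1_r, <- !exp_plus, <- exp_0; f_equal; ring).
  replace (u 0 ^ 2 + v 0 ^ 2) with (u 0 * u 0 + v 0 * v 0) by ring.
  rewrite <- e, <- (Rmult_1_r (u t ^ 2 + v t ^ 2)), <- hE; ring.
Qed.

(* MathComp is only imported inside this module: at top level its notations would
   change the meaning of [<] on [nat] and [R] in the statement of [theorem3]. *)
Module Lindblad.
Import HB.structures.
Import mathcomp.boot.all_boot mathcomp.order.all_order mathcomp.algebra.all_algebra.
Import mathcomp.real_closed.complex mathcomp.reals_stdlib.Rstruct.
Import mathcomp.algebra.spectral mathcomp.algebra.sesquilinear.
Import mathcomp.algebra_tactics.ring mathcomp.algebra_tactics.lra.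
Import Order.TTheory GRing.Theory Num.Theory ComplexField.Normc.
Set Implicit Arguments.
Unset Strict Implicit.
Unset Printing Implicit Defensive.
Local Open Scope ring_scope.
Local Open Scope complex_scope.
Local Open Scope sesquilinear_scope.

Definition lindblad_mx (F : rcfType) n (w : F) (Hm X : 'M[F[i]]_n) : 'M[F[i]]_n :=
  (- 'i * (1 - w)%:C) *: (Hm *m X - X *m Hm) + w%:C *: (Hm *m X *m Hm^t*)
  - (w / 2)%:C *: (Hm^t* *m Hm *m X + X *m (Hm^t* *m Hm)).

(* The eigenvalue of [lindblad_mx w Hm] on the matrix unit [e_a e_b^*] when
   [Hm e_a = x e_a] and [Hm e_b = y e_b] (see [conj_lindblad]). *)
Definition lindblad_eig (F : rcfType) (w x y : F) : F[i] :=
  (- (w / 2) * (x - y) ^+ 2) +i* ((w - 1) * (x - y)).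

Lemma Re_lindblad_eig_lt0 (F : rcfType) (w x y : F) : 0 < w -> x != y ->
  complex.Re (lindblad_eig w x y) < 0.
Proof.
move=> w_gt0 xy; have : 0 < (x - y) ^+ 2 by rewrite exprn_even_gt0 //= subr_eq0.
rewrite /=; nra.
Qed.

Lemma lindblad_eig_eq0 (F : rcfType) (w x y : F) : 0 < w ->
  (lindblad_eig w x y == 0) = (x == y).
Proof.
move=> w_gt0; have [->|xy] := eqVneq x y.
  by rewrite /lindblad_eig subrr expr0n /= !mulr0 !eqxx.
by apply: contraTF (Re_lindblad_eig_lt0 w_gt0 xy) => /eqP ->; rewrite ltxx.
Qed.

Lemma lindblad_eigE (F : rcfType) w x y : lindblad_eig w x y =
  - 'i * (1 - w)%:C * (x%:C - y%:C) + w%:C * x%:C * y%:C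
  - (w / 2)%:C * (x%:C * x%:C + y%:C * y%:C) :> F[i].
Proof.
apply/eqP; rewrite eq_complex /=; simpc.
by apply/andP; split; apply/eqP; field.
Qed.


Section Eigenbasis.
Variables (F : rcfType) (n : nat) (P Hm : 'M[F[i]]_n) (lam : 'I_n -> F).
Local Notation D := (diag_mx (\row_i (lam i)%:C) : 'M[F[i]]_n).
Hypotheses (P_unitary : P \is unitarymx) (Hm_def : Hm = P^t* *m D *m P).

Local Notation conj M := (P *m M *m P^t*).

Lemma unitarymx_trC_mul : P^t* *m P = 1%:M.
Proof. by rewrite -invmx_unitary // mulVmx // unitarymx_unit. Qed.

Lemma conj_mxM M N : conj (M *m N) = conj M *m conj N.
Proof. by rewrite !mulmxA -(mulmxA _ (P^t*) P) unitarymx_trC_mul mulmx1. Qed.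

Lemma conj_mxK M : P^t* *m conj M *m P = M.
Proof. by rewrite !mulmxA unitarymx_trC_mul mul1mx -mulmxA unitarymx_trC_mul mulmx1. Qed.

Lemma conj_mx_inj M N : conj M = conj N -> M = N.
Proof. by move=> /(congr1 (fun A => P^t* *m A *m P)) /=; rewrite !conj_mxK. Qed.

Lemma conj_eigen : conj Hm = D.
Proof.
by rewrite Hm_def !mulmxA (unitarymxP P_unitary) mul1mx -mulmxA (unitarymxP P_unitary) mulmx1.
Qed.

Lemma eigen_trC : Hm^t* = Hm.
Proof.
rewrite Hm_def !trmx_mul !map_mxM trmxCK mulmxA; congr (_ *m _ *m _).
rewrite tr_diag_mx map_diag_mx; congr diag_mx.
by apply/rowP => i; rewrite !mxE; exact: conjc_real.
Qed.

Lemma conj_commutator X a b :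
  conj (Hm *m X - X *m Hm) a b = ((lam a)%:C - (lam b)%:C) * conj X a b.
Proof.
rewrite mulmxBr mulmxBl !conj_mxM conj_eigen.
move: (conj X) => Y.
by rewrite mul_diag_mx mul_mx_diag !mxE; ring.
Qed.

Lemma conj_lindblad w X a b :
  conj (lindblad_mx w Hm X) a b = lindblad_eig w (lam a) (lam b) * conj X a b.
Proof.
rewrite /lindblad_mx eigen_trC lindblad_eigE.
do 3 rewrite ?(mulmxDr, mulmxDl, mulmxN, mulNmx) -?scalemxAr -?scalemxAl.
rewrite !conj_mxM conj_eigen; move: (conj X) => Y.
by rewrite !mulmx_diag !(mul_diag_mx, mul_mx_diag) !mxE; ring.
Qed.

End Eigenbasis.

Section Spectral.
Variables (F : rcfType) (n : nat).

Lemma hermitian_spectral (A : 'M[F[i]]_n) : A^t* = A ->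
  exists (P : 'M_n) (lam : 'I_n -> F),
    P \is unitarymx /\ A = P^t* *m diag_mx (\row_i (lam i)%:C) *m P.
Proof.
move=> A_herm; have A_hsym : A \is hermsymmx.
  by apply/is_hermitianmxP; rewrite expr0 scale1r A_herm.
have /hermitian_normalmx/orthomx_spectralP A_eq := A_hsym.
have real_diag := hermitian_spectral_diag_real A_hsym.
exists (spectralmx A), (fun i => complex.Re (spectral_diag A 0 i)).
split; first exact: spectral_unitarymx.
rewrite {1}A_eq invmx_unitary ?spectral_unitarymx //.
congr (_ *m diag_mx _ *m _); apply/rowP => i; rewrite mxE RRe_real //.
by move/mxOverP: real_diag; apply.
Qed.

Lemma conj_mx_eq0 (P M : 'M[F[i]]_n) : P \is unitarymx ->
  (P *m M *m P^t* == 0) = (M == 0).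
Proof.
move=> Pu; apply/eqP/eqP => [|->]; last by rewrite mulmx0 mul0mx.
by move=> e; apply: (conj_mx_inj Pu); rewrite e mulmx0 mul0mx.
Qed.

Lemma lindblad_mx_eq0 w (Hm X : 'M[F[i]]_n) : 0 < w -> Hm^t* = Hm ->
  (lindblad_mx w Hm X == 0) = (Hm *m X - X *m Hm == 0).
Proof.
move=> w_gt0 /hermitian_spectral [P [lam [Pu Hm_def]]].
rewrite -(conj_mx_eq0 _ Pu) -[RHS](conj_mx_eq0 _ Pu).
have entry_eq0 a b : ((P *m lindblad_mx w Hm X *m P^t*) a b == 0) =
    ((P *m (Hm *m X - X *m Hm) *m P^t*) a b == 0).
  rewrite (conj_lindblad Pu Hm_def) (conj_commutator Pu Hm_def) !mulf_eq0.
  by rewrite lindblad_eig_eq0 // subr_eq0 (inj_eq (@complexI _)).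
by rewrite !matrix_eq0; apply: eq_forallb => a; apply: eq_forallb => b.
Qed.

End Spectral.

Section EigenProjector.
Variables (F : rcfType) (n : nat) (P : 'M[F[i]]_n).
Hypothesis P_unitary : P \is unitarymx.

Definition eigenproj k : 'M[F[i]]_n := (row k P)^t* *m row k P.

Lemma conj_eigenproj k : P *m eigenproj k *m P^t* = delta_mx k k.
Proof.
rewrite /eigenproj mulmxA.
have -> : P *m (row k P)^t* = delta_mx k 0.
  apply/matrixP => i j; rewrite ord1 -col1 -(unitarymxP P_unitary) !mxE.
  by apply: eq_bigr => l _; rewrite !mxE.
by rewrite -mulmxA -row_mul (unitarymxP P_unitary) row1 mul_delta_mx.
Qed.

Lemma eigenproj_trC k : (eigenproj k)^t* = eigenproj k.
Proof. by rewrite trmx_mul map_mxM trmxCK. Qed.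

Lemma mxtrace_eigenproj k : \tr (eigenproj k) = 1.
Proof.
rewrite -[eigenproj k]mul1mx -(unitarymx_trC_mul P_unitary) -mulmxA mxtrace_mulC.
rewrite conj_eigenproj /mxtrace (bigD1 k) //= mxE !eqxx big1 ?addr0 // => i /negPf ik.
by rewrite mxE ik.
Qed.

Lemma eigenproj_psd k (v : 'cV_n) : 0 <= (v^t* *m eigenproj k *m v) 0 0.
Proof.
have -> : v^t* *m eigenproj k *m v = (row k P *m v)^t* *m (row k P *m v).
  by rewrite trmx_mul map_mxM !mulmxA.
by rewrite mxE big_ord1 !mxE mulrC mul_conjC_ge0.
Qed.

Lemma conj_eigenproj_commutator (Hm : 'M[F[i]]_n) lam k :
  Hm = P^t* *m diag_mx (\row_i (lam i)%:C) *m P ->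
  Hm *m eigenproj k - eigenproj k *m Hm = 0.
Proof.
move=> Hm_def; apply: (conj_mx_inj P_unitary); apply/matrixP => a b.
rewrite (conj_commutator P_unitary Hm_def) conj_eigenproj mulmx0 mul0mx !mxE.
by case: (eqVneq a k) => [->|]; case: (eqVneq k b) => [<-|]; rewrite ?subrr ?mul0r ?mulr0.
Qed.

Lemma eigenproj_inj : injective eigenproj.
Proof.
move=> k l /(congr1 (fun M => P *m M *m P^t*)); rewrite !conj_eigenproj.
move=> /matrixP/(_ k k); rewrite !mxE !eqxx /=.
by case: eqP => // _ /eqP; rewrite oner_eq0.
Qed.

End EigenProjector.

Definition cderiv (f : R -> R[i]) (t : R) (z : R[i]) : Prop :=
  derivable_pt_lim (fun s => complex.Re (f s)) t (complex.Re z) /\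
  derivable_pt_lim (fun s => complex.Im (f s)) t (complex.Im z).

Definition ccvg (f : R -> R[i]) (l : R[i]) : Prop :=
  forall e, 0 < e -> exists T, forall t, T < t -> normc (f t - l) < e.

Lemma eventually_fin (I : finType) (Q : I -> R -> Prop) :
  (forall i, exists T, forall t, T < t -> Q i t) ->
  exists T, forall t, T < t -> forall i, Q i t.
Proof.
move=> /fin_all_exists[T hT]; exists (\sum_i `|T i|) => t tT i; apply: hT.
apply: le_lt_trans tT; apply: le_trans (ler_norm _) _.
by rewrite (bigD1 i) //= lerDl sumr_ge0.
Qed.

Lemma ccvg_add f g l l' : ccvg f l -> ccvg g l' -> ccvg (fun s => f s + g s) (l + l').
Proof.
move=> hf hg e e_gt0.
have [|T hT] :=
  @eventually_fin bool (fun b t => normc (if b then f t - l else g t - l') < e / 2).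
  by case; [apply: hf | apply: hg]; lra.
exists T => t /hT h; have := h true; have := h false.
rewrite opprD addrACA; have := le_normcD (f t - l) (g t - l'); lra.
Qed.

Lemma ccvg_mull c f l : ccvg f l -> ccvg (fun s => c * f s) (c * l).
Proof.
move=> hf e e_gt0; have c_ge0 : 0 <= normc c by case: c => a b; apply: sqrtr_ge0.
have [|T hT] := hf (e / (normc c + 1)); first by apply: divr_gt0; lra.
exists T => t /hT h; rewrite -mulrBr normcM.
apply: le_lt_trans (ler_wpM2l c_ge0 (ltW h)) _.
by rewrite mulrA ltr_pdivrMr; [nra | lra].
Qed.

Lemma ccvg_sum n (F : 'I_n -> R -> R[i]) (l : 'I_n -> R[i]) :
  (forall i, ccvg (F i) (l i)) -> ccvg (fun s => \sum_i F i s) (\sum_i l i).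
Proof.
elim: n F l => [|n IHn] F l hF.
  move=> e e_gt0; exists 0 => t _; rewrite !big_ord0 subrr normc0 //.
pose W i := widen_ord (leqnSn n) i.
have hW := IHn (fun i => F (W i)) (fun i => l (W i)) (fun i => hF (W i)).
move=> e /(ccvg_add hW (hF ord_max))[T hT].
by exists T => t /hT; rewrite !big_ord_recr.
Qed.

Lemma mulmx3E m n p q (A : 'M[R[i]]_(m, n)) (G : 'M_(n, p)) (B : 'M_(p, q)) a b :
  (A *m G *m B) a b = \sum_j \sum_k (A a j * B k b) * G j k.
Proof.
rewrite mxE exchange_big; apply: eq_bigr => k _; rewrite mxE mulr_suml.
by apply: eq_bigr => j _; ring.
Qed.

Lemma ccvg_mx_entry n (A B : 'M[R[i]]_n) (G : R -> 'M[R[i]]_n) (L : 'M[R[i]]_n) a b :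
  (forall j k, ccvg (fun s => G s j k) (L j k)) ->
  ccvg (fun s => (A *m G s *m B) a b) ((A *m L *m B) a b).
Proof.
move=> hG e; rewrite mulmx3E.
have hS := ccvg_sum (fun j => ccvg_sum (fun k => ccvg_mull (A a j * B k b) (hG j k))).
move=> /hS[T hT].
by exists T => t /hT; rewrite mulmx3E.
Qed.

Lemma cderiv_ext f g t z : f =1 g -> cderiv f t z -> cderiv g t z.
Proof.
move=> fg [hre him].
by split; [apply: derivable_pt_lim_ext hre | apply: derivable_pt_lim_ext him] => s; rewrite fg.
Qed.

Lemma cderiv_add f g t z z' :
  cderiv f t z -> cderiv g t z' -> cderiv (fun s => f s + g s) t (z + z').
Proof.
case: z z' => [x y] [x' y'] [fre fim] [gre gim].
split; [apply: (derivable_pt_lim_ext (fun s => complex.Re (f s) + complex.Re (g s)))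
       | apply: (derivable_pt_lim_ext (fun s => complex.Im (f s) + complex.Im (g s)))];
  try exact: derivable_pt_lim_plus;
  by move=> s; case: (f s) (g s) => [? ?] [? ?].
Qed.

Lemma cderiv_mull c f t z : cderiv f t z -> cderiv (fun s => c * f s) t (c * z).
Proof.
case: c z => [p q] [x y] [fre fim].
split; [apply: (derivable_pt_lim_ext (fun s => p * complex.Re (f s) + (- q) * complex.Im (f s)))
       | apply: (derivable_pt_lim_ext (fun s => q * complex.Re (f s) + p * complex.Im (f s)))].
- by move=> s; case: (f s) => ? ? /=; rewrite mulNr.
- by rewrite /= -mulNr; apply: derivable_pt_lim_comb.
- by move=> s; case: (f s) => ? ? /=; rewrite addrC.
- by rewrite /= addrC; apply: derivable_pt_lim_comb.
Qed.

Lemma cderiv_sum n (F : 'I_n -> R -> R[i]) (F' : 'I_n -> R[i]) t :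
  (forall i, cderiv (F i) t (F' i)) -> cderiv (fun s => \sum_i F i s) t (\sum_i F' i).
Proof.
elim: n F F' => [|n IHn] F F' hF.
  apply: (@cderiv_ext (fun _ => 0)) => [s|]; first by rewrite big_ord0.
  by rewrite big_ord0; split; apply: derivable_pt_lim_const.
pose W i := widen_ord (leqnSn n) i.
have hW := IHn (fun i => F (W i)) (fun i => F' (W i)) (fun i => hF (W i)).
rewrite big_ord_recr; apply: cderiv_ext (cderiv_add hW (hF ord_max)) => s.
by rewrite big_ord_recr.
Qed.

Lemma cderiv_mx_entry n (A B : 'M[R[i]]_n) (G : R -> 'M[R[i]]_n) (G' : 'M[R[i]]_n) t a b :
  (forall j k, cderiv (fun s => G s j k) t (G' j k)) ->
  cderiv (fun s => (A *m G s *m B) a b) t ((A *m G' *m B) a b).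
Proof.
move=> hG; rewrite mulmx3E.
have hS := cderiv_sum (fun j => cderiv_sum (fun k => cderiv_mull (A a j * B k b) (hG j k))).
by apply: cderiv_ext hS => s; rewrite mulmx3E.
Qed.

Lemma cderiv0_const f : (forall t, cderiv f t 0) -> forall t, f t = f 0.
Proof.
move=> hf t; apply/eqP; rewrite eq_complex; apply/andP; split; apply/eqP.
  by apply: (derivable_pt_lim_0_const (fun s => complex.Re (f s))) => s; case: (hf s).
by apply: (derivable_pt_lim_0_const (fun s => complex.Im (f s))) => s; case: (hf s).
Qed.

Lemma cderiv_linear_decay f m : complex.Re m < 0 ->
  (forall t, cderiv f t (m * f t)) -> ccvg f 0.
Proof.
case: m => a b /= a_lt0 hf.
pose u s := complex.Re (f s); pose v s := complex.Im (f s).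
have huv t : derivable_pt_lim u t (a * u t - b * v t) /\
              derivable_pt_lim v t (b * u t + a * v t).
  rewrite /u /v; case: (hf t); case: (f t) => x y /= hu hv.
  by split; last rewrite addrC.
move=> e e_gt0; pose N0 := u 0 ^+ 2 + v 0 ^+ 2; pose q := e / (N0 + 1).
have N0_ge0 : 0 <= N0 by rewrite addr_ge0 ?sqr_ge0.
have q_gt0 : 0 < q by rewrite divr_gt0 //; lra.
have [||T hT] := exp_vanishes a q; [exact/RltP | exact/RltP |].
exists T => t /RltP /hT /RltP exp_lt; rewrite subr0.
have Nt := rotation_ode_sq_norm _ _ _ _ huv t.
have exp_gt0 : 0 < exp (a * t) by apply/RltP; apply: exp_pos.
move: (exp (a * t)) exp_lt exp_gt0 Nt => E E_lt E_gt0.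
rewrite !RpowE !RplusE RmultE -/N0 => Nt.
have -> : normc (f t) = Num.sqrt (u t ^+ 2 + v t ^+ 2) by rewrite /u /v; case: (f t).
have Nt_ge0 : 0 <= u t ^+ 2 + v t ^+ 2 by rewrite addr_ge0 ?sqr_ge0.
have q_def : q * (N0 + 1) = e by rewrite /q divfK //; lra.
have sqrt_sq := sqr_sqrtr Nt_ge0; have := sqrtr_ge0 (u t ^+ 2 + v t ^+ 2).
move: (Num.sqrt _) sqrt_sq => x x_sq x_ge0.
have : E * (N0 + 1) < e by rewrite -q_def ltr_pM2r //; lra.
nra.
Qed.

Definition cplx (z : Defs.C) : R[i] := Complex (Defs.Re z) (Defs.Im z).

Lemma cplx_inj : injective cplx.
Proof. by case=> [a b] [c d] [-> ->]. Qed.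

Lemma cplxD x y : cplx (Cadd x y) = cplx x + cplx y. Proof. by case: x; case: y. Qed.
Lemma cplxN x : cplx (Copp x) = - cplx x. Proof. by case: x. Qed.
Lemma cplxM x y : cplx (Cmul x y) = cplx x * cplx y. Proof. by case: x; case: y. Qed.
Lemma cplxJ x : cplx (Cconj x) = (cplx x)^*. Proof. by case: x. Qed.

Lemma cplx_sum n f : cplx (Csum n f) = \sum_(i < n) cplx (f i).
Proof. by elim: n => [|n IHn] /=; rewrite ?big_ord0 // cplxD IHn big_ord_recr. Qed.

Lemma Cnorm_cplx z : Cnorm z = normc (cplx z).
Proof. by rewrite /Cnorm RsqrtE !RpowE RplusE. Qed.

Definition toM {n} (A : Mat) : 'M[R[i]]_n := \matrix_(i, j) cplx (A i j).

Definition ofM n (M : 'M[R[i]]_n) : Mat := fun i j =>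
  if (insub i, insub j) is (Some a, Some b)
  then mkC (complex.Re (M a b)) (complex.Im (M a b)) else Defs.C0.

Lemma cplx_ofM n (M : 'M[R[i]]_n) (a b : 'I_n) : cplx (ofM M a b) = M a b.
Proof. by rewrite /ofM !valK; case: (M a b). Qed.

Lemma toM_ofM n (M : 'M[R[i]]_n) : toM (ofM M) = M.
Proof. by apply/matrixP => a b; rewrite mxE cplx_ofM. Qed.

Lemma meq_toM n A B : meq n A B <-> toM A = toM B :> 'M_n.
Proof.
split=> [eqAB | /matrixP eqAB i j /ssrnat.ltP i_lt /ssrnat.ltP j_lt].
  by apply/matrixP => a b; rewrite !mxE eqAB //; apply/ssrnat.ltP.
by apply: cplx_inj; have := eqAB (Ordinal i_lt) (Ordinal j_lt); rewrite !mxE.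
Qed.

Section Translation.
Variable n : nat.
Implicit Types (A B : Mat).
Local Notation toM := (@toM n).

Lemma toM_mzero : toM mzero = 0.
Proof. by apply/matrixP => a b; rewrite !mxE. Qed.

Lemma toM_madd A B : toM (madd A B) = toM A + toM B.
Proof. by apply/matrixP => a b; rewrite !mxE cplxD. Qed.

Lemma toM_mopp A : toM (mopp A) = - toM A.
Proof. by apply/matrixP => a b; rewrite !mxE cplxN. Qed.

Lemma toM_mscale c A : toM (mscale c A) = cplx c *: toM A.
Proof. by apply/matrixP => a b; rewrite !mxE cplxM. Qed.

Lemma toM_mmul A B : toM (mmul n A B) = toM A *m toM B.
Proof.
apply/matrixP => a b; rewrite !mxE cplx_sum; apply: eq_bigr => k _.
by rewrite cplxM !mxE.
Qed.

Lemma toM_adj A : toM (adj A) = (toM A)^t*.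
Proof. by apply/matrixP => a b; rewrite !mxE cplxJ. Qed.

Lemma toM_comm A B : toM (comm n A B) = toM A *m toM B - toM B *m toM A.
Proof. by rewrite toM_madd toM_mopp !toM_mmul. Qed.

Lemma toM_gksl w H rho : toM (gksl n w H rho) = lindblad_mx w (toM H) (toM rho).
Proof.
rewrite /gksl /anticomm !(toM_madd, toM_mscale, toM_comm, toM_mmul, toM_adj).
have -> : cplx (Cmul (Copp Ci) (RtoC (1 - w))) = - 'i * (1 - w)%:C.
  by apply/eqP; rewrite eq_complex /=; simpc.
rewrite [cplx (RtoC w) *: _]scalerDr scalerA.
have -> : cplx (RtoC w) * cplx (RtoC (- (1 / 2))) = - (w / 2)%:C.
  apply/eqP; rewrite eq_complex /= RoppE RdivE R1E IZRposE INRE /= !R0E.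
  by apply/andP; split; apply/eqP; ring.
by rewrite /lindblad_mx scaleNr addrA.
Qed.

Lemma toM_herm H : Defs.hermitian n H -> (toM H)^t* = toM H.
Proof. by move/meq_toM; rewrite toM_adj => e; rewrite -e. Qed.

Lemma density_ofM (A : 'M[R[i]]_n) : A^t* = A ->
  (forall v : 'cV_n, 0 <= (v^t* *m A *m v) 0 0) -> \tr A = 1 -> density n (ofM A).
Proof.
move=> A_herm A_psd A_tr; split; [|split].
- by apply/meq_toM; rewrite toM_adj toM_ofM A_herm.
- move=> v; pose vc : 'cV_n := \col_i cplx (v i).
  have := A_psd vc; rewrite lecE => /andP[_].
  have -> : (vc^t* *m A *m vc) 0 0 = cplx (Csum n (fun i =>
      Cmul (Cconj (v i)) (Csum n (fun j => Cmul (ofM A i j) (v j))))).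
    rewrite mulmx3E cplx_sum; apply: eq_bigr => i _.
    rewrite cplxM cplxJ cplx_sum mulr_sumr; apply: eq_bigr => j _.
    by rewrite cplxM cplx_ofM !mxE; ring.
  by move/RleP.
- apply: cplx_inj; rewrite cplx_sum (_ : cplx Defs.C1 = 1) // -A_tr; apply: eq_bigr => i _.
  by rewrite cplx_ofM.
Qed.

End Translation.

Lemma trace_dim1 A : trace 1 A = Defs.C1 -> A 0%N 0%N = Defs.C1.
Proof. by move=> tr1; apply: cplx_inj; rewrite -tr1 /= cplxD add0r. Qed.

Section Dynamics.
Variables (n : nat) (w : R) (H : Mat).
Hypotheses (H_herm : Defs.hermitian n H) (w_pos : Rlt 0 w).
Let w_gt0 : 0 < w := introT RltP w_pos.

Lemma gksl_stationary_iff rho :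
  meq n (gksl n w H rho) mzero <-> meq n (comm n H rho) mzero.
Proof.
rewrite !meq_toM toM_gksl toM_comm toM_mzero.
have eq0 := lindblad_mx_eq0 (toM rho) w_gt0 (toM_herm H_herm).
by split=> /eqP; [rewrite eq0 | rewrite -eq0] => /eqP.
Qed.

Lemma ham_stationary_iff rho :
  meq n (ham n H rho) mzero <-> meq n (comm n H rho) mzero.
Proof.
rewrite !meq_toM toM_mscale toM_mzero; split=> [/eqP|->]; last by rewrite scaler0.
rewrite scaler_eq0 => /orP[/eqP/(congr1 (@complex.Im _))/eqP|/eqP //].
by rewrite /= oppr_eq0 oner_eq0.
Qed.

Lemma eigenproj_stationary (P : 'M[R[i]]_n) lam k : P \is unitarymx ->
  toM H = P^t* *m diag_mx (\row_i (lam i)%:C) *m P ->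
  stationary n (gksl n w H) (ofM (eigenproj P k)).
Proof.
move=> Pu H_eq; split.
  apply: density_ofM; [exact: eigenproj_trC | exact: eigenproj_psd | exact: mxtrace_eigenproj].
apply/gksl_stationary_iff/meq_toM.
by rewrite toM_comm toM_mzero toM_ofM; apply: conj_eigenproj_commutator H_eq.
Qed.

Lemma gksl_relaxing_iff : (0 < n)%coq_nat -> relaxing n (gksl n w H) <-> n = 1%N.
Proof.
move=> /ssrnat.ltP n_gt0; have [P [lam [Pu H_eq]]] := hermitian_spectral (toM_herm H_herm).
have stat k := eigenproj_stationary k Pu H_eq.
split=> [[rho [_ rho_uniq]] | n1].
  apply/eqP; rewrite eqn_leq n_gt0 andbT leqNgt; apply/negP => n_gt1.
  have E_eq k : toM (ofM (eigenproj P k)) = toM rho :> 'M_n.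
    exact/meq_toM/rho_uniq/stat.
  have := E_eq (Ordinal n_gt0); rewrite -(E_eq (Ordinal n_gt1)) !toM_ofM.
  by move/(eigenproj_inj Pu)/(congr1 val).
have [[_ [_ tr0]] _] := stat (Ordinal n_gt0).
exists (ofM (eigenproj P (Ordinal n_gt0))); split => // sigma [[_ [_ tr_sigma]] _] i j.
have dim1 A : trace n A = Defs.C1 -> A 0%N 0%N = Defs.C1 by rewrite n1; apply: trace_dim1.
have lt1 k : (k < n)%coq_nat -> k = 0%N by rewrite n1 => /ssrnat.ltP; rewrite ltnS leqn0 => /eqP.
by move=> /lt1 -> /lt1 ->; rewrite !dim1.
Qed.

Lemma gksl_solution_converges rho : is_solution n (gksl n w H) rho -> converges n rho.
Proof.
move=> sol; have [P [lam [Pu H_eq]]] := hermitian_spectral (toM_herm H_herm).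
pose Y s : 'M_n := P *m toM (rho s) *m P^t*.
have dY t a b : cderiv (fun s => Y s a b) t (lindblad_eig w (lam a) (lam b) * Y t a b).
  rewrite -(conj_lindblad Pu H_eq) -toM_gksl; apply: cderiv_mx_entry => j k.
  have [||re_deriv im_deriv] := sol t j k; try exact/ssrnat.ltP.
  apply: (@cderiv_ext (fun s => cplx (rho s j k))) => [s|]; first by rewrite mxE.
  by rewrite mxE.
pose L : 'M_n := \matrix_(a, b) (if lam a == lam b then Y 0 a b else 0).
have cY a b : ccvg (fun s => Y s a b) (L a b).
  rewrite mxE; case: eqP => [eq_ab | /eqP ne_ab]; last first.
    by apply: (cderiv_linear_decay (Re_lindblad_eig_lt0 w_gt0 ne_ab)) => t; apply: dY.
  have eig0 : lindblad_eig w (lam a) (lam b) = 0 by apply/eqP; rewrite lindblad_eig_eq0 // eq_ab.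
  have Y_const : forall t, Y t a b = Y 0 a b.
    by apply: cderiv0_const => t; have := dY t a b; rewrite eig0 mul0r.
  by move=> e e_gt0; exists 0 => t _; rewrite Y_const subrr normc0.
have cM i j : ccvg (fun s => toM (rho s) i j) ((P^t* *m L *m P) i j).
  move=> e /(ccvg_mx_entry (P^t*) P i j cY)[T hT].
  by exists T => t /hT; rewrite conj_mxK.
exists (ofM (P^t* *m L *m P)) => eps /RltP eps_gt0.
have [T hT] := eventually_fin (fun ij : 'I_n * 'I_n => cM ij.1 ij.2 eps eps_gt0).
exists T => t /RltP /hT tT i j /ssrnat.ltP i_lt /ssrnat.ltP j_lt.
have := tT (Ordinal i_lt, Ordinal j_lt).
by rewrite /= mxE -(cplx_ofM (P^t* *m L *m P)) -cplxN -cplxD -Cnorm_cplx => /RltP.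
Qed.

End Dynamics.

End Lindblad.

Theorem theorem3 (n : nat) (H : Mat) (w : R)
  (hn : (0 < n)%nat) (hH : hermitian n H) (hw : 0 < w <= 1) :
  (forall rho,
     (stationary n (gksl n w H) rho <-> stationary n (ham n H) rho) /\
     (stationary n (ham n H) rho <-> density n rho /\ meq n (comm n H rho) mzero))
  /\
  (forall rho : R -> Mat,
     is_solution n (gksl n w H) rho -> density n (rho 0) -> converges n rho)
  /\
  (~ relaxing n (gksl n w H) <-> (1 < n)%nat).
Proof.
  destruct hw as [w_pos _].
  pose proof (Lindblad.gksl_stationary_iff hH w_pos) as gksl_iff.
  pose proof (Lindblad.ham_stationary_iff n H) as ham_iff.
  pose proof (Lindblad.gksl_relaxing_iff hH w_pos hn) as relax_iff.
  split; [| split].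
  - intro rho; specialize (gksl_iff rho); specialize (ham_iff rho).
    unfold stationary; tauto.
  - intros rho sol _; exact (Lindblad.gksl_solution_converges hH w_pos sol).
  - split.
    + intro not_relax; destruct (Nat.eq_dec n 1) as [n1 | n1]; [| lia].
      exfalso; exact (not_relax (proj2 relax_iff n1)).
    + intros n_gt1 relax; apply relax_iff in relax; lia.
Qed.
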